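(* Consider the system $$\frac{dx_1}{dt}=x_1\Big[r_1\Big(1-\frac{x_1}{K_1}\Big)-\frac{a x_2}{1+h a x_1}\Big],\qquad \frac{dx_2}{dt}=x_2\Big[\frac{e a x_1}{1+h a x_1}-d+r_2\Big(1-\frac{x_2}{K_2}\Big)\Big]$$ on $X=\mathbb R^2_+$, with constants $r_1,r_2,K_1,K_2,a,h,e>0$ and $d\ge0$. Then: (i) the host $x_1$ is persistent in $X$ if $d>r_2$ or $\frac{r_1}{a}>K_2\big(1-\frac{d}{r_2}\big)>0$; (ii) the parasite $x_2$ is persistent in $X$ if $r_2+\frac{eaK_1}{1+ahK_1}>d$; (iii) the system is permanent in $X$ if either $r_2+\frac{eaK_1}{1+ahK_1}>d>r_2$ or $\frac{r_1}{a}>K_2\big(1-\frac{d}{r_2}\big)>0$.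
   Context: A species $x_i$ is persistent if there is $\varepsilon>0$ such that $\liminf_{t\to\infty}x_i(t)\ge\varepsilon$ for every solution with $x_1(0)>0$ and $x_2(0)>0$; the system is permanent if both species are persistent. *)

From Stdlib Require Import Reals.
Open Scope R_scope.

Definition f1 (r1 K1 a h : R) (x1 x2 : R) : R :=
  x1 * (r1 * (1 - x1 / K1) - a * x2 / (1 + h * a * x1)).

Definition f2 (r2 K2 a h e d : R) (x1 x2 : R) : R :=
  x2 * (e * a * x1 / (1 + h * a * x1) - d + r2 * (1 - x2 / K2)).

Definition is_solution (r1 r2 K1 K2 a h e d : R) (x1 x2 : R -> R) : Prop :=
  (forall eps, 0 < eps -> exists delta, 0 < delta /\
     forall t, 0 <= t < delta ->
       Rabs (x1 t - x1 0) < eps /\ Rabs (x2 t - x2 0) < eps) /\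
  (forall t, 0 < t ->
     derivable_pt_lim x1 t (f1 r1 K1 a h (x1 t) (x2 t)) /\
     derivable_pt_lim x2 t (f2 r2 K2 a h e d (x1 t) (x2 t))).

Definition liminf_ge (u : R -> R) (eps : R) : Prop :=
  forall eta, 0 < eta -> exists T, forall t, T <= t -> eps - eta <= u t.

Definition persistent (r1 r2 K1 K2 a h e d : R)
    (proj : (R -> R) -> (R -> R) -> (R -> R)) : Prop :=
  exists eps, 0 < eps /\
    forall x1 x2 : R -> R,
      is_solution r1 r2 K1 K2 a h e d x1 x2 ->
      0 < x1 0 -> 0 < x2 0 ->
      liminf_ge (proj x1 x2) eps.

Definition host_persistent r1 r2 K1 K2 a h e d :=
  persistent r1 r2 K1 K2 a h e d (fun x1 _ => x1).
Definition parasite_persistent r1 r2 K1 K2 a h e d :=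
  persistent r1 r2 K1 K2 a h e d (fun _ x2 => x2).
Definition permanent r1 r2 K1 K2 a h e d :=
  host_persistent r1 r2 K1 K2 a h e d /\ parasite_persistent r1 r2 K1 K2 a h e d.

From Stdlib Require Import Reals Lra Classical.
Open Scope R_scope.

(* Both equations have the form u' = u G(t).  Solutions eventually enter the box
   (0, 2 K1] x (0, X2max], where every per-capita rate is bounded below by some -L.
   A species u persists as soon as the following escape property holds: while u stays
   below a level delta, the other species is driven within a uniform time tau into a
   region where the per-capita rate of u is at least k > 0.  Then u cannot stay below
   delta forever, and after each downcrossing of delta it loses at most the factor
   exp (-L tau) before growing again.  For the host the region is "parasite below
   c2", with c2 slightly above s2 = max 0 (K2 (1 - d / r2)), the parasite's carrying
   level without host; the host grows there because a s2 < r1.  For the parasite,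
   when d >= r2 the host persists and, with the parasite rare, approaches K1, where
   the parasite's rate is close to r2 - d + e a K1 / (1 + a h K1) > 0; when d < r2
   the parasite's own logistic term suffices. *)

Lemma exp_le x y : x <= y -> exp x <= exp y.
Proof. intros [Hxy | ->]; [left; apply exp_increasing; exact Hxy|lra]. Qed.

Lemma continuity_pt_of_lim f x l : derivable_pt_lim f x l -> continuity_pt f x.
Proof. intros H. apply derivable_continuous_pt. exists l. exact H. Qed.

Lemma continuity_pt_nbhs f x : continuity_pt f x ->
  forall eps, 0 < eps -> exists del, 0 < del /\
    forall y, Rabs (y - x) < del -> Rabs (f y - f x) < eps.
Proof.
  intros Hf eps Heps. destruct (Hf eps Heps) as [del [Hdel Hy]].
  exists del; split; [exact Hdel|]. intros y Hyx.
  destruct (Req_dec y x) as [-> | Hne].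
  - rewrite Rminus_diag, Rabs_R0. exact Heps.
  - apply (Hy y). split; [split; [exact I|auto]|exact Hyx].
Qed.

(* The crossing time is the supremum of the sublevel set [{t | f t <= c}]. *)
Lemma last_crossing f s t1 c : s < t1 ->
  (forall t, s <= t <= t1 -> continuity_pt f t) -> f s <= c -> c < f t1 ->
  exists t0, s <= t0 < t1 /\ f t0 = c /\ forall t, t0 < t <= t1 -> c < f t.
Proof.
  intros Hst Hc Hs Ht.
  set (E := fun t => s <= t <= t1 /\ f t <= c).
  assert (Hb : bound E) by (exists t1; intros t [Ht' _]; lra).
  assert (HE : exists x, E x) by (exists s; split; [lra|exact Hs]).
  destruct (completeness E Hb HE) as [m [Hub Hlub]].
  assert (Hsm : s <= m) by (apply Hub; split; [lra|exact Hs]).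
  assert (Hmt : m <= t1) by (apply Hlub; intros t [Ht' _]; lra).
  assert (Hafter : forall t, m < t <= t1 -> c < f t).
  { intros t Htt. destruct (Rlt_dec c (f t)) as [H|H]; [exact H|].
    assert (t <= m) by (apply Hub; split; lra). lra. }
  assert (Hcont := continuity_pt_nbhs f m (Hc m (conj Hsm Hmt))).
  destruct (Rtotal_order (f m) c) as [Hlt|[Heq|Hgt]].
  - exfalso. destruct (Req_dec m t1) as [-> | Hne]; [lra|].
    destruct (Hcont (c - f m)) as [del [Hdel Hnear]]; [lra|].
    set (t := Rmin (m + del / 2) t1).
    assert (Htm : m < t <= t1) by (unfold t; split; [apply Rmin_glb_lt|apply Rmin_r]; lra).
    assert (Hdist : Rabs (t - m) < del).
    { rewrite Rabs_right by lra. pose proof (Rmin_l (m + del / 2) t1). unfold t in *. lra. }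
    specialize (Hnear t Hdist). specialize (Hafter t Htm). apply Rabs_def2 in Hnear. lra.
  - exists m. split; [split; [exact Hsm|]|split; [exact Heq|exact Hafter]].
    destruct Hmt as [Hmt | ->]; [exact Hmt|lra].
  - exfalso. destruct (Hcont (f m - c)) as [del [Hdel Hnear]]; [lra|].
    assert (m <= m - del / 2); [|lra].
    apply Hlub. intros t [Ht1 Ht2].
    destruct (Rle_dec t (m - del / 2)) as [H|H]; [exact H|exfalso].
    assert (Htm : t <= m) by (apply Hub; split; assumption).
    assert (Hdist : Rabs (t - m) < del) by (rewrite Rabs_left1; lra).
    specialize (Hnear t Hdist). apply Rabs_def2 in Hnear. lra.
Qed.

Lemma first_crossing f s t1 c : s < t1 ->
  (forall t, s <= t <= t1 -> continuity_pt f t) -> c < f s -> f t1 <= c ->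
  exists t0, s < t0 <= t1 /\ f t0 = c /\ forall t, s <= t < t0 -> c < f t.
Proof.
  intros Hst Hc Hs Ht.
  destruct (last_crossing (fun t => f (- t)) (- t1) (- s) c) as [t0 [Ht0 [Hf0 Hafter]]].
  - lra.
  - intros t Htt. apply (continuity_pt_comp Ropp f).
    + apply (continuity_pt_opp id), derivable_continuous_pt, derivable_pt_id.
    + apply Hc. lra.
  - rewrite Ropp_involutive. exact Ht.
  - rewrite Ropp_involutive. exact Hs.
  - exists (- t0). split; [lra|split; [exact Hf0|]].
    intros t Htt. rewrite <- (Ropp_involutive t). apply Hafter. lra.
Qed.

Lemma derive_nonneg_le f D s q : s <= q ->
  (forall t, s <= t <= q -> derivable_pt_lim f t (D t)) ->
  (forall t, s < t < q -> 0 <= D t) -> f s <= f q.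
Proof.
  intros [Hsq | ->] Hd Hpos; [|lra].
  destruct (MVT_cor2 f D s q Hsq Hd) as [c [Hc Hc']].
  assert (0 <= D c * (q - s)) by (apply Rmult_le_pos; [apply Hpos; exact Hc'|lra]). lra.
Qed.

Lemma stays_above u D s q c :
  (forall t, s <= t <= q -> derivable_pt_lim u t (D t)) ->
  c <= u s -> (forall t, s < t <= q -> u t < c -> 0 <= D t) ->
  forall t, s <= t <= q -> c <= u t.
Proof.
  intros Hd Hs Hpush t1 Ht1. destruct (Rle_dec c (u t1)) as [H|H]; [exact H|exfalso].
  assert (Hst : s < t1) by (destruct (Req_dec s t1) as [-> | ]; lra).
  destruct (last_crossing (fun t => - u t) s t1 (- c) Hst) as [t0 [Ht0 [Hf0 Hafter]]].
  - intros t Ht. apply (continuity_pt_opp u), (continuity_pt_of_lim _ _ (D t)), Hd. lra.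
  - lra.
  - lra.
  - assert (u t0 <= u t1); [|lra].
    apply (derive_nonneg_le u D t0 t1); [lra|intros; apply Hd; lra|].
    intros t Ht. apply Hpush; [lra|]. specialize (Hafter t ltac:(lra)). lra.
Qed.

Lemma stays_below u D s q c :
  (forall t, s <= t <= q -> derivable_pt_lim u t (D t)) ->
  u s <= c -> (forall t, s < t <= q -> c < u t -> D t <= 0) ->
  forall t, s <= t <= q -> u t <= c.
Proof.
  intros Hd Hs Hpush t Ht.
  assert (- c <= - u t); [|lra].
  apply (stays_above (fun t => - u t) (fun t => - D t) s q (- c)); [| lra | | exact Ht].
  - intros r Hr. apply (derivable_pt_lim_opp u), Hd, Hr.
  - intros r Hr Hlt. specialize (Hpush r Hr). lra.
Qed.

Lemma derivable_pt_lim_exp_scal k t :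
  derivable_pt_lim (fun r => exp (k * r)) t (exp (k * t) * k).
Proof.
  apply (derivable_pt_lim_comp (fun r => k * r) exp t k), derivable_pt_lim_exp.
  pose proof (derivable_pt_lim_scal id k t 1 (derivable_pt_lim_id t)) as H.
  rewrite Rmult_1_r in H. exact H.
Qed.

(* [u r * exp (- k r)] is nondecreasing. *)
Lemma exp_lower_bound u G s t k : s <= t ->
  (forall r, s <= r <= t -> derivable_pt_lim u r (u r * G r)) ->
  (forall r, s < r < t -> 0 <= u r /\ k <= G r) ->
  u s * exp (k * (t - s)) <= u t.
Proof.
  intros Hst Hd Hpos.
  assert (H : u s * exp (- k * s) <= u t * exp (- k * t)).
  { apply (derive_nonneg_le (fun r => u r * exp (- k * r))
      (fun r => u r * G r * exp (- k * r) + u r * (exp (- k * r) * - k)) s t Hst).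
    - intros r Hr. apply (derivable_pt_lim_mult u (fun r => exp (- k * r))).
      + apply Hd, Hr.
      + apply derivable_pt_lim_exp_scal.
    - intros r Hr. destruct (Hpos r Hr) as [Hu HG].
      replace (u r * G r * exp (- k * r) + u r * (exp (- k * r) * - k))
        with (u r * (G r - k) * exp (- k * r)) by ring.
      apply Rmult_le_pos; [apply Rmult_le_pos; lra|left; apply exp_pos]. }
  apply (Rmult_le_compat_r (exp (k * t))) in H; [|left; apply exp_pos].
  rewrite !Rmult_assoc, <- !exp_plus in H.
  replace (- k * t + k * t) with 0 in H by ring.
  replace (- k * s + k * t) with (k * (t - s)) in H by ring.
  rewrite exp_0, Rmult_1_r in H. exact H.
Qed.

Lemma growth_positive u G p :
  (forall t, p <= t -> derivable_pt_lim u t (u t * G t)) -> 0 < u p ->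
  (forall q, p <= q -> exists C, forall r, p <= r <= q -> 0 <= u r -> - C <= G r) ->
  forall t, p <= t -> 0 < u t.
Proof.
  intros Hd Hp HC q Hq. destruct (Rlt_dec 0 (u q)) as [H|H]; [exact H|exfalso].
  assert (Hpq : p < q) by (destruct (Req_dec p q) as [-> | ]; lra).
  destruct (first_crossing u p q 0 Hpq) as [t0 [Ht0 [Hz Hbefore]]]; [|lra|lra|].
  { intros t Ht. apply (continuity_pt_of_lim _ _ (u t * G t)), Hd. lra. }
  destruct (HC t0 ltac:(lra)) as [C HCb].
  assert (Hgrow : u p * exp (- C * (t0 - p)) <= u t0).
  { apply (exp_lower_bound u G p t0 (- C)); [lra|intros; apply Hd; lra|].
    intros r Hr. assert (Hur := Hbefore r ltac:(lra)).
    split; [lra|apply HCb; lra]. }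
  assert (0 < u p * exp (- C * (t0 - p))) by (apply Rmult_lt_0_compat; [lra|apply exp_pos]).
  lra.
Qed.

Lemma derivable_pt_lim_plus_linear u t l m : derivable_pt_lim u t l ->
  derivable_pt_lim (fun r => u r + m * r) t (l + m).
Proof.
  intros H. pose proof (derivable_pt_lim_scal id m t 1 (derivable_pt_lim_id t)) as Hm.
  rewrite Rmult_1_r in Hm. exact (derivable_pt_lim_plus u (mult_real_fct m id) t l m H Hm).
Qed.

(* Above [c] the solution decreases at speed at least [kappa c]. *)
Lemma enters_below u G s q c kappa U tau :
  (forall r, s <= r <= q -> derivable_pt_lim u r (u r * G r)) ->
  (forall r, s <= r <= q -> c < u r -> G r <= - kappa) ->
  0 < c -> 0 < kappa -> u s <= U -> 0 <= tau -> U - c <= kappa * c * tau ->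
  forall t, s + tau <= t <= q -> u t <= c.
Proof.
  intros Hd Hrate Hc Hk HU Htau Henter t Ht.
  destruct (Rle_dec (u t) c) as [H|H]; [exact H|exfalso].
  assert (Habove : forall r, s <= r <= t -> c < u r).
  { intros r Hr. destruct (Rlt_dec c (u r)) as [H1|H1]; [exact H1|exfalso].
    assert (u t <= c); [|lra].
    apply (stays_below u (fun r => u r * G r) r t c); [intros; apply Hd; lra|lra| |lra].
    intros r' Hr' Hl. assert (Hrr := Hrate r' ltac:(lra) Hl). nra. }
  assert (Hdrift : u t + kappa * c * t <= u s + kappa * c * s).
  { assert (- (u s + kappa * c * s) <= - (u t + kappa * c * t)); [|lra].
    apply (derive_nonneg_le (fun r => - (u r + kappa * c * r))
      (fun r => - (u r * G r + kappa * c)) s t); [lra| |].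
    - intros r Hr. apply (derivable_pt_lim_opp (fun r => u r + kappa * c * r)).
      apply derivable_pt_lim_plus_linear, Hd. lra.
    - intros r Hr. assert (Hu := Habove r ltac:(lra)).
      assert (Hrr := Hrate r ltac:(lra) Hu). nra. }
  assert (0 <= kappa * c * (t - s - tau)) by (apply Rmult_le_pos; nra).
  nra.
Qed.

(* Below [c] (and above the barrier [U]) the solution increases at speed at least [kappa U]. *)
Lemma enters_above u G s q c kappa U tau :
  (forall r, s <= r <= q -> derivable_pt_lim u r (u r * G r)) ->
  (forall r, s <= r <= q -> 0 < u r) ->
  (forall r, s <= r <= q -> u r < c -> kappa <= G r) ->
  0 < U -> U <= c -> 0 < kappa -> U <= u s -> 0 <= tau -> c - U <= kappa * U * tau ->
  forall t, s + tau <= t <= q -> c <= u t.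
Proof.
  intros Hd Hpos Hrate HU0 HUc Hk HU Htau Henter t Ht.
  assert (Hbarrier : forall r, s <= r <= q -> U <= u r).
  { apply (stays_above u (fun r => u r * G r) s q U Hd HU).
    intros r Hr Hl. assert (Hu := Hpos r ltac:(lra)). assert (Hrr := Hrate r ltac:(lra) ltac:(lra)).
    nra. }
  destruct (Rle_dec c (u t)) as [H|H]; [exact H|exfalso].
  assert (Hbelow : forall r, s <= r <= t -> u r < c).
  { intros r Hr. destruct (Rlt_dec (u r) c) as [H1|H1]; [exact H1|exfalso].
    assert (c <= u t); [|lra].
    apply (stays_above u (fun r => u r * G r) r t c); [intros; apply Hd; lra|lra| |lra].
    intros r' Hr' Hl. assert (Hu := Hpos r' ltac:(lra)).
    assert (Hrr := Hrate r' ltac:(lra) Hl). nra. }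
  assert (Hdrift : u s + - (kappa * U) * s <= u t + - (kappa * U) * t).
  { apply (derive_nonneg_le (fun r => u r + - (kappa * U) * r)
      (fun r => u r * G r + - (kappa * U)) s t); [lra| |].
    - intros r Hr. apply derivable_pt_lim_plus_linear, Hd. lra.
    - intros r Hr. assert (Hu := Hbarrier r ltac:(lra)).
      assert (Hrr := Hrate r ltac:(lra) (Hbelow r ltac:(lra))). nra. }
  assert (0 <= kappa * U * (t - s - tau)) by (apply Rmult_le_pos; nra).
  nra.
Qed.

Lemma eventually_below u G s c kappa :
  (forall r, s <= r -> derivable_pt_lim u r (u r * G r)) ->
  (forall r, s <= r -> c < u r -> G r <= - kappa) ->
  0 < c -> 0 < kappa ->
  exists T, s <= T /\ forall t, T <= t -> u t <= c.
Proof.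
  intros Hd Hrate Hc Hk.
  set (U := Rmax (u s) c). set (tau := (U - c) / (kappa * c)).
  assert (HUc : c <= U) by apply Rmax_r.
  assert (Htau : 0 <= tau) by (apply Rle_mult_inv_pos; [lra|nra]).
  exists (s + tau). split; [lra|]. intros t Ht.
  apply (enters_below u G s t c kappa U tau); [intros; apply Hd; lra
    |intros; apply Hrate; lra|lra|lra|apply Rmax_l|lra| |lra].
  right. unfold tau. field. lra.
Qed.

Lemma eventually_above u G s c kappa :
  (forall r, s <= r -> derivable_pt_lim u r (u r * G r)) ->
  (forall r, s <= r -> 0 < u r) ->
  (forall r, s <= r -> u r < c -> kappa <= G r) ->
  0 < c -> 0 < kappa ->
  exists T, s <= T /\ forall t, T <= t -> c <= u t.
Proof.
  intros Hd Hpos Hrate Hc Hk.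
  set (U := Rmin (u s) c). set (tau := (c - U) / (kappa * U)).
  assert (HUc : U <= c) by apply Rmin_r.
  assert (HU0 : 0 < U) by (apply Rmin_glb_lt; [apply Hpos|]; lra).
  assert (Htau : 0 <= tau) by (apply Rle_mult_inv_pos; [lra|nra]).
  exists (s + tau). split; [lra|]. intros t Ht.
  apply (enters_above u G s t c kappa U tau); [intros; apply Hd; lra
    |intros; apply Hpos; lra|intros; apply Hrate; lra|lra|lra|lra|apply Rmin_l|lra| |lra].
  right. unfold tau. field. lra.
Qed.

Section Escape.
Variables (u G : R -> R) (T delta tau k : R).
Hypotheses (Hderiv : forall r, T <= r -> derivable_pt_lim u r (u r * G r))
  (Hpos : forall r, T <= r -> 0 < u r) (Hdelta : 0 < delta) (Htau : 0 <= tau) (Hk : 0 < k)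
  (Hescape : forall s t, T <= s -> s <= t -> (forall r, s <= r <= t -> u r <= delta) ->
     forall r, s + tau <= r <= t -> k <= G r).

(* Staying below [delta] forever would force exponential growth. *)
Lemma escape_exceeds : exists s, T <= s /\ delta < u s.
Proof.
  apply NNPP. intros Hnone.
  assert (Hle : forall t, T <= t -> u t <= delta).
  { intros t Ht. apply Rnot_lt_le. intros Hlt. apply Hnone. exists t. split; assumption. }
  set (m := T + tau). assert (Hum : 0 < u m) by (apply Hpos; unfold m; lra).
  assert (Hstep : 0 < delta / (k * u m)) by (apply Rdiv_lt_0_compat; nra).
  set (t := m + delta / (k * u m)).
  assert (Hgrow : u m * exp (k * (t - m)) <= u t).
  { apply (exp_lower_bound u G m t k); [unfold t; lra|intros; apply Hderiv; unfold m in *; lra|].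
    intros r Hr. split; [left; apply Hpos; unfold m in *; lra|].
    apply (Hescape T t); [lra|unfold t, m in *; lra| |unfold t, m in *; lra].
    intros r' Hr'. apply Hle. lra. }
  assert (Hexp := exp_ineq1_le (k * (t - m))).
  assert (Hkt : k * (t - m) = delta / u m) by (unfold t; field; lra).
  assert (u m * (delta / u m) = delta) by (field; lra).
  assert (u t <= delta) by (apply Hle; unfold t, m in *; lra).
  nra.
Qed.

(* Within [tau] of leaving level [delta] the decay rate is at most [L]; afterwards [u] grows. *)
Lemma dip_bound L t0 t : (forall r, T <= r -> - L <= G r) -> 0 <= L ->
  T <= t0 <= t -> delta <= u t0 -> (forall r, t0 <= r <= t -> u r <= delta) ->
  delta * exp (- L * tau) <= u t.
Proof.
  intros HL HL0 Ht Ht0 Hbelow.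
  assert (Hdecay : forall r, t0 <= r <= t -> r <= t0 + tau -> delta * exp (- L * tau) <= u r).
  { intros r Hr Hrtau.
    assert (Hexp : u t0 * exp (- L * (r - t0)) <= u r).
    { apply (exp_lower_bound u G t0 r (- L)); [lra|intros; apply Hderiv; lra|].
      intros x Hx. split; [left; apply Hpos; lra|apply HL; lra]. }
    assert (exp (- L * tau) <= exp (- L * (r - t0))) by (apply exp_le; nra).
    pose proof (exp_pos (- L * tau)). nra. }
  destruct (Rle_dec t (t0 + tau)) as [Hshort|Hlong]; [apply Hdecay; lra|].
  assert (Hflat : u (t0 + tau) * exp (0 * (t - (t0 + tau))) <= u t).
  { apply (exp_lower_bound u G (t0 + tau) t 0); [lra|intros; apply Hderiv; lra|].
    intros r Hr. split; [left; apply Hpos; lra|].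
    assert (k <= G r) by (apply (Hescape t0 t); [lra|lra|exact Hbelow|lra]). lra. }
  rewrite Rmult_0_l, exp_0, Rmult_1_r in Hflat.
  assert (delta * exp (- L * tau) <= u (t0 + tau)) by (apply Hdecay; lra). lra.
Qed.

Lemma eventually_ge_of_escape L : (forall r, T <= r -> - L <= G r) -> 0 <= L ->
  exists T', forall t, T' <= t -> delta * exp (- L * tau) <= u t.
Proof.
  intros HL HL0. destruct escape_exceeds as [s1 [Hs1 Hus1]].
  exists s1. intros t Ht.
  assert (Hexp : exp (- L * tau) <= 1) by (rewrite <- exp_0; apply exp_le; nra).
  destruct (Rle_dec delta (u t)) as [H|H]; [pose proof (exp_pos (- L * tau)); nra|].
  assert (Hst : s1 < t) by (destruct (Req_dec s1 t) as [-> | ]; lra).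
  destruct (last_crossing (fun r => - u r) s1 t (- delta) Hst) as [t0 [Ht0 [Hf0 Hafter]]];
    [|lra|lra|].
  { intros r Hr. apply (continuity_pt_opp u), (continuity_pt_of_lim _ _ (u r * G r)), Hderiv. lra. }
  apply (dip_bound L t0 t HL HL0); [lra|lra|].
  intros r Hr. destruct (Req_dec r t0) as [-> | Hne]; [lra|].
  specialize (Hafter r ltac:(lra)). lra.
Qed.

End Escape.

Lemma small_enough p q eta theta : 0 < p -> 0 < q -> 0 < eta -> 0 < theta ->
  exists del, 0 < del /\ p * del <= eta /\ q * del <= theta.
Proof.
  intros Hp Hq Heta Htheta. exists (Rmin (eta / p) (theta / q)).
  assert (Hp' : p * (eta / p) = eta) by (field; lra).
  assert (Hq' : q * (theta / q) = theta) by (field; lra).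
  split; [apply Rmin_glb_lt; apply Rdiv_lt_0_compat; lra|split].
  - rewrite <- Hp' at 2. apply Rmult_le_compat_l; [lra|apply Rmin_l].
  - rewrite <- Hq' at 2. apply Rmult_le_compat_l; [lra|apply Rmin_r].
Qed.

Lemma div_le_self y D : 0 <= y -> 1 <= D -> y / D <= y.
Proof.
  intros Hy HD. apply (Rmult_le_reg_r D); [lra|].
  unfold Rdiv. rewrite Rmult_assoc, Rinv_l, Rmult_1_r by lra. nra.
Qed.

Section HostParasite.
Variables r1 r2 K1 K2 a h e d : R.

Definition response x := e * a * x / (1 + h * a * x).
Definition host_rate x1 x2 := r1 * (1 - x1 / K1) - a * x2 / (1 + h * a * x1).
Definition parasite_rate x1 x2 := response x1 - d + r2 * (1 - x2 / K2).

Definition solution (x1 x2 : R -> R) :=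
  is_solution r1 r2 K1 K2 a h e d x1 x2 /\ 0 < x1 0 /\ 0 < x2 0.

Lemma persistent_of_eventually proj :
  (exists eps, 0 < eps /\ forall x1 x2, solution x1 x2 ->
     exists T, forall t, T <= t -> eps <= proj x1 x2 t) ->
  persistent r1 r2 K1 K2 a h e d proj.
Proof.
  intros [eps [Heps H]]. exists eps. split; [exact Heps|].
  intros x1 x2 Hs H1 H2 eta Heta. destruct (H x1 x2 (conj Hs (conj H1 H2))) as [T HT].
  exists T. intros t Ht. specialize (HT t Ht). lra.
Qed.

Lemma solution_derive x1 x2 : solution x1 x2 -> forall t, 0 < t ->
  derivable_pt_lim x1 t (x1 t * host_rate (x1 t) (x2 t)) /\
  derivable_pt_lim x2 t (x2 t * parasite_rate (x1 t) (x2 t)).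
Proof. intros [[_ H] _] t Ht. exact (H t Ht). Qed.

Lemma solution_bounded x1 x2 p q : solution x1 x2 -> 0 < p <= q ->
  exists B, forall r, p <= r <= q -> Rabs (x1 r) <= B /\ Rabs (x2 r) <= B.
Proof.
  intros Hs Hpq.
  assert (Hcont : forall c, p <= c <= q ->
    continuity_pt (fun t => Rabs (x1 t) + Rabs (x2 t)) c).
  { intros c Hc. destruct (solution_derive x1 x2 Hs c ltac:(lra)) as [H1 H2].
    apply (continuity_pt_plus (fun t => Rabs (x1 t)) (fun t => Rabs (x2 t)));
      apply (continuity_pt_comp _ Rabs); try apply Rcontinuity_abs.
    - exact (continuity_pt_of_lim _ _ _ H1).
    - exact (continuity_pt_of_lim _ _ _ H2). }
  destruct (continuity_ab_maj _ p q (proj2 Hpq) Hcont) as [M [HM _]].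
  exists (Rabs (x1 M) + Rabs (x2 M)). intros r Hr. specialize (HM r Hr).
  pose proof (Rabs_pos (x1 r)). pose proof (Rabs_pos (x2 r)). split; lra.
Qed.

Hypotheses (Hr1 : 0 < r1) (Hr2 : 0 < r2) (HK1 : 0 < K1) (HK2 : 0 < K2)
  (Ha : 0 < a) (Hh : 0 < h) (He : 0 < e) (Hd : 0 <= d).

Lemma one_le_handling x : 0 <= x -> 1 <= 1 + h * a * x.
Proof. intros Hx. assert (0 <= h * a * x) by (apply Rmult_le_pos; nra). lra. Qed.

Lemma response_bounds x : 0 <= x -> 0 <= response x <= e * a * x.
Proof.
  intros Hx. assert (Hea : 0 <= e * a * x) by (apply Rmult_le_pos; nra).
  unfold response. split.
  - apply Rle_mult_inv_pos; [exact Hea|pose proof (one_le_handling x Hx); lra].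
  - apply div_le_self, one_le_handling; assumption.
Qed.

Lemma response_increment x y : 0 <= y <= x ->
  0 <= response x - response y <= e * a * (x - y).
Proof.
  intros Hxy. pose proof (one_le_handling x ltac:(lra)). pose proof (one_le_handling y ltac:(lra)).
  replace (response x - response y)
    with (e * a * (x - y) / ((1 + h * a * x) * (1 + h * a * y))) by (unfold response; field; lra).
  assert (0 <= e * a * (x - y)) by (apply Rmult_le_pos; nra).
  split; [apply Rle_mult_inv_pos; nra|apply div_le_self; nra].
Qed.

Lemma host_rate_le x1 x2 : 0 <= x1 -> 0 <= x2 -> host_rate x1 x2 <= r1 - r1 / K1 * x1.
Proof.
  intros H1 H2. unfold host_rate.
  assert (0 <= a * x2 / (1 + h * a * x1)).
  { apply Rle_mult_inv_pos; [nra|pose proof (one_le_handling x1 H1); lra]. }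
  replace (r1 * (1 - x1 / K1)) with (r1 - r1 / K1 * x1) by (field; lra). lra.
Qed.

Lemma host_rate_ge x1 x2 : 0 <= x1 -> r1 - r1 / K1 * x1 - a * Rabs x2 <= host_rate x1 x2.
Proof.
  intros H1. unfold host_rate. assert (Hden := one_le_handling x1 H1).
  assert (a * x2 / (1 + h * a * x1) <= a * Rabs x2).
  { apply (Rle_trans _ (a * Rabs x2 / (1 + h * a * x1))).
    - apply Rmult_le_compat_r; [left; apply Rinv_0_lt_compat; lra|].
      apply Rmult_le_compat_l; [lra|apply Rle_abs].
    - apply div_le_self; [pose proof (Rabs_pos x2); nra|exact Hden]. }
  replace (r1 * (1 - x1 / K1)) with (r1 - r1 / K1 * x1) by (field; lra). lra.
Qed.

Lemma parasite_rate_eq x1 x2 : parasite_rate x1 x2 = response x1 + (r2 - d) - r2 / K2 * x2.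
Proof. unfold parasite_rate, Rdiv. ring. Qed.

Lemma solution_pos x1 x2 : solution x1 x2 ->
  exists p, 0 < p /\ forall t, p <= t -> 0 < x1 t /\ 0 < x2 t.
Proof.
  intros Hs. pose proof Hs as [[Hcont _] [H10 H20]].
  destruct (Hcont (Rmin (x1 0) (x2 0))) as [del [Hdel Hnear]]; [apply Rmin_glb_lt; lra|].
  set (p := del / 2). assert (Hp : 0 < p) by (unfold p; lra).
  destruct (Hnear p ltac:(unfold p; lra)) as [E1 E2].
  apply Rabs_def2 in E1. apply Rabs_def2 in E2.
  pose proof (Rmin_l (x1 0) (x2 0)). pose proof (Rmin_r (x1 0) (x2 0)).
  assert (Hder := solution_derive x1 x2 Hs).
  assert (P1 : forall t, p <= t -> 0 < x1 t).
  { apply (growth_positive x1 (fun t => host_rate (x1 t) (x2 t)) p);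
      [intros t Ht; apply (Hder t); lra|lra|].
    intros q Hq. destruct (solution_bounded x1 x2 p q Hs (conj Hp Hq)) as [B HB].
    exists (r1 / K1 * B + a * B). intros r Hr Hx. destruct (HB r Hr) as [B1 B2].
    pose proof (host_rate_ge (x1 r) (x2 r) Hx). pose proof (Rle_abs (x1 r)).
    assert (r1 / K1 * x1 r <= r1 / K1 * B)
      by (apply Rmult_le_compat_l; [apply Rle_mult_inv_pos|]; lra).
    assert (a * Rabs (x2 r) <= a * B) by (apply Rmult_le_compat_l; lra).
    lra. }
  assert (P2 : forall t, p <= t -> 0 < x2 t).
  { apply (growth_positive x2 (fun t => parasite_rate (x1 t) (x2 t)) p);
      [intros t Ht; apply (Hder t); lra|lra|].
    intros q Hq. destruct (solution_bounded x1 x2 p q Hs (conj Hp Hq)) as [B HB].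
    exists (d + r2 / K2 * B). intros r Hr _. destruct (HB r Hr) as [_ B2].
    rewrite parasite_rate_eq.
    pose proof (response_bounds (x1 r) ltac:(left; apply P1; lra)). pose proof (Rle_abs (x2 r)).
    assert (r2 / K2 * x2 r <= r2 / K2 * B)
      by (apply Rmult_le_compat_l; [apply Rle_mult_inv_pos|]; lra).
    lra. }
  exists p. split; [exact Hp|]. intros t Ht. split; auto.
Qed.

Definition X2max := K2 * (2 * e * a * K1 + 2 * r2) / r2.

Lemma X2max_pos : 0 < X2max.
Proof.
  unfold X2max. apply Rdiv_lt_0_compat; [|lra].
  apply Rmult_lt_0_compat; [lra|]. assert (0 < e * a * K1)
    by (repeat apply Rmult_lt_0_compat; lra). lra.
Qed.

Definition in_box x1 x2 := 0 < x1 <= 2 * K1 /\ 0 < x2 <= X2max.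

(* The logistic terms bound both species eventually: first [x1], then [x2]. *)
Lemma solution_eventually_in_box x1 x2 : solution x1 x2 ->
  exists T, 0 < T /\ forall t, T <= t -> in_box (x1 t) (x2 t).
Proof.
  intros Hs. destruct (solution_pos x1 x2 Hs) as [p [Hp Hpos]].
  assert (Hder := solution_derive x1 x2 Hs).
  destruct (eventually_below x1 (fun t => host_rate (x1 t) (x2 t)) p (2 * K1) r1)
    as [T1 [HT1 HB1]]; [intros r Hr; apply (Hder r); lra| |lra|lra|].
  { intros r Hr Hbig. destruct (Hpos r Hr).
    assert (Hle := host_rate_le (x1 r) (x2 r) ltac:(lra) ltac:(lra)).
    assert (r1 / K1 * (2 * K1) < r1 / K1 * x1 r)
      by (apply Rmult_lt_compat_l; [apply Rdiv_lt_0_compat|]; lra).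
    replace (r1 / K1 * (2 * K1)) with (2 * r1) in * by (field; lra). lra. }
  destruct (eventually_below x2 (fun t => parasite_rate (x1 t) (x2 t)) T1 X2max r2)
    as [T2 [HT2 HB2]]; [intros r Hr; apply (Hder r); lra| |apply X2max_pos|lra|].
  { intros r Hr Hbig. destruct (Hpos r ltac:(lra)). rewrite parasite_rate_eq.
    pose proof (response_bounds (x1 r) ltac:(lra)). pose proof (HB1 r Hr).
    assert (e * a * x1 r <= e * a * (2 * K1)) by (apply Rmult_le_compat_l; nra).
    assert (r2 / K2 * X2max < r2 / K2 * x2 r)
      by (apply Rmult_lt_compat_l; [apply Rdiv_lt_0_compat|]; lra).
    replace (r2 / K2 * X2max) with (2 * e * a * K1 + 2 * r2) in * by (unfold X2max; field; lra).
    lra. }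
  exists T2. split; [lra|]. intros t Ht. destruct (Hpos t ltac:(lra)).
  repeat split; try lra; [apply HB1|apply HB2]; lra.
Qed.

Lemma host_rate_ge_box x1 x2 : in_box x1 x2 -> - (r1 + a * X2max) <= host_rate x1 x2.
Proof.
  intros [[H1 H1'] [H2 H2']]. assert (Hrate := host_rate_ge x1 x2 ltac:(lra)).
  rewrite Rabs_pos_eq in Hrate by lra.
  assert (r1 / K1 * x1 <= r1 / K1 * (2 * K1))
    by (apply Rmult_le_compat_l; [apply Rle_mult_inv_pos|]; lra).
  replace (r1 / K1 * (2 * K1)) with (2 * r1) in * by (field; lra).
  assert (a * x2 <= a * X2max) by (apply Rmult_le_compat_l; lra). lra.
Qed.

Lemma parasite_rate_ge_box x1 x2 : in_box x1 x2 -> - (d + r2 / K2 * X2max) <= parasite_rate x1 x2.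
Proof.
  intros [[H1 _] [H2 H2']]. rewrite parasite_rate_eq.
  pose proof (response_bounds x1 ltac:(lra)).
  assert (r2 / K2 * x2 <= r2 / K2 * X2max)
    by (apply Rmult_le_compat_l; [apply Rle_mult_inv_pos|]; lra).
  lra.
Qed.

Lemma host_recovery_region s2 : 0 <= s2 -> a * s2 < r1 -> r2 - d <= r2 / K2 * s2 ->
  exists del c2 k, 0 < del /\ 0 < c2 /\ 0 < k /\
    (forall x1 x2, 0 <= x1 <= del -> c2 < x2 -> parasite_rate x1 x2 <= - k) /\
    (forall x1 x2, 0 <= x1 <= del -> 0 <= x2 <= c2 -> k <= host_rate x1 x2).
Proof.
  intros Hs2 Hgap Hsat.
  set (g := r1 - a * s2). assert (Hg : 0 < g) by (unfold g; lra).
  set (c2 := s2 + g / (4 * a)).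
  set (kp := r2 * g / (8 * a * K2)).
  assert (Hkp : 0 < kp) by (apply Rdiv_lt_0_compat; [nra|]; repeat apply Rmult_lt_0_compat; lra).
  assert (Hc2 : r2 / K2 * c2 = r2 / K2 * s2 + 2 * kp) by (unfold c2, kp; field; lra).
  assert (Hac2 : a * c2 = a * s2 + g / 4) by (unfold c2; field; lra).
  assert (Hc2pos : 0 < c2) by (unfold c2; assert (0 < g / (4 * a)) by (apply Rdiv_lt_0_compat; lra); lra).
  destruct (small_enough (e * a) (r1 / K1) kp (g / 4)) as [del [Hdel [Hdel1 Hdel2]]];
    [nra|apply Rdiv_lt_0_compat; lra|lra|lra|].
  exists del, c2, (Rmin kp (g / 2)).
  pose proof (Rmin_l kp (g / 2)). pose proof (Rmin_r kp (g / 2)).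
  split; [exact Hdel|split; [exact Hc2pos|split; [apply Rmin_glb_lt; lra|split]]].
  - intros x1 x2 Hx1 Hx2. rewrite parasite_rate_eq.
    pose proof (response_bounds x1 ltac:(lra)).
    assert (e * a * x1 <= e * a * del) by (apply Rmult_le_compat_l; nra).
    assert (r2 / K2 * c2 < r2 / K2 * x2)
      by (apply Rmult_lt_compat_l; [apply Rdiv_lt_0_compat|]; lra).
    lra.
  - intros x1 x2 Hx1 Hx2. assert (Hrate := host_rate_ge x1 x2 ltac:(lra)).
    rewrite Rabs_pos_eq in Hrate by lra.
    assert (r1 / K1 * x1 <= r1 / K1 * del)
      by (apply Rmult_le_compat_l; [apply Rle_mult_inv_pos|]; lra).
    assert (a * x2 <= a * c2) by (apply Rmult_le_compat_l; lra).
    unfold g in *. lra.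
Qed.

Lemma host_eventually_ge s2 : 0 <= s2 -> a * s2 < r1 -> r2 - d <= r2 / K2 * s2 ->
  exists eps, 0 < eps /\ forall x1 x2, solution x1 x2 ->
    exists T, forall t, T <= t -> eps <= x1 t.
Proof.
  intros Hs2 Hgap Hsat.
  destruct (host_recovery_region s2 Hs2 Hgap Hsat)
    as [del [c2 [k [Hdel [Hc2 [Hk [Hdecline Hgrow]]]]]]].
  set (tau := Rmax 0 ((X2max - c2) / (k * c2))).
  assert (Htau : 0 <= tau) by apply Rmax_l.
  set (L := r1 + a * X2max).
  assert (HL : 0 <= L) by (pose proof X2max_pos; unfold L; nra).
  exists (del * exp (- L * tau)). split; [apply Rmult_lt_0_compat; [lra|apply exp_pos]|].
  intros x1 x2 Hs.
  destruct (solution_eventually_in_box x1 x2 Hs) as [T [HT Hbox]].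
  assert (Hder := solution_derive x1 x2 Hs).
  apply (eventually_ge_of_escape x1 (fun t => host_rate (x1 t) (x2 t)) T del tau k);
    [intros r Hr; apply (Hder r); lra|intros r Hr; apply (Hbox r Hr)|lra|exact Htau|lra| |
     intros r Hr; apply host_rate_ge_box, Hbox, Hr|exact HL].
  intros s t Hs' Hst Hrare r Hr.
  assert (Hx2 : x2 r <= c2).
  { apply (enters_below x2 (fun t => parasite_rate (x1 t) (x2 t)) s t c2 k X2max tau);
      [intros r' Hr'; apply (Hder r'); lra| |lra|lra|apply (Hbox s Hs')|exact Htau| |lra].
    - intros r' Hr' Hbig. destruct (Hbox r' ltac:(lra)) as [[P1 _] _].
      apply Hdecline; [split; [lra|apply Hrare; lra]|exact Hbig].
    - assert (Hq : (X2max - c2) / (k * c2) <= tau) by apply Rmax_r.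
      apply (Rmult_le_compat_l (k * c2)) in Hq; [|nra].
      replace (k * c2 * ((X2max - c2) / (k * c2))) with (X2max - c2) in Hq by (field; lra).
      lra. }
  destruct (Hbox r ltac:(lra)) as [[P1 _] [P2 _]].
  apply Hgrow; [split; [lra|apply Hrare; lra]|lra].
Qed.

Lemma parasite_eventually_ge_low : d < r2 ->
  exists eps, 0 < eps /\ forall x1 x2, solution x1 x2 ->
    exists T, forall t, T <= t -> eps <= x2 t.
Proof.
  intros Hdr. set (c := (r2 - d) * K2 / (2 * r2)).
  assert (Hc : 0 < c) by (apply Rdiv_lt_0_compat; nra).
  exists c. split; [exact Hc|]. intros x1 x2 Hs.
  destruct (solution_pos x1 x2 Hs) as [p [Hp Hpos]].
  destruct (eventually_above x2 (fun t => parasite_rate (x1 t) (x2 t)) p c ((r2 - d) / 2))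
    as [T [_ HT]]; [intros r Hr; apply (solution_derive x1 x2 Hs r); lra
    |intros r Hr; apply (Hpos r Hr)| |exact Hc|lra|exists T; exact HT].
  intros r Hr Hsmall. rewrite parasite_rate_eq. destruct (Hpos r Hr).
  pose proof (response_bounds (x1 r) ltac:(lra)).
  assert (r2 / K2 * x2 r < r2 / K2 * c)
    by (apply Rmult_lt_compat_l; [apply Rdiv_lt_0_compat|]; lra).
  replace (r2 / K2 * c) with ((r2 - d) / 2) in * by (unfold c; field; lra).
  lra.
Qed.

Lemma parasite_recovery_region : 0 < r2 - d + response K1 ->
  exists del c1 k, 0 < del /\ 0 < c1 /\ 0 < k /\
    (forall x1 x2, 0 <= x1 < c1 -> 0 <= x2 <= del -> k <= host_rate x1 x2) /\
    (forall x1 x2, c1 <= x1 -> 0 <= x2 <= del -> k <= parasite_rate x1 x2).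
Proof.
  intros Hrho. set (rho := r2 - d + response K1) in *.
  destruct (small_enough (e * a) 1 (rho / 4) (K1 / 2)) as [m [Hm [Hm1 Hm2]]]; [nra|lra|lra|lra|].
  set (c1 := K1 - m).
  set (kh := r1 * m / (2 * K1)).
  assert (Hkh : 0 < kh) by (apply Rdiv_lt_0_compat; nra).
  destruct (small_enough a (r2 / K2) kh (rho / 4)) as [del [Hdel [Hdel1 Hdel2]]];
    [lra|apply Rdiv_lt_0_compat; lra|lra|lra|].
  exists del, c1, (Rmin kh (rho / 2)).
  pose proof (Rmin_l kh (rho / 2)). pose proof (Rmin_r kh (rho / 2)).
  split; [exact Hdel|split; [unfold c1; lra|split; [apply Rmin_glb_lt; lra|split]]].
  - intros x1 x2 Hx1 Hx2. assert (Hrate := host_rate_ge x1 x2 ltac:(lra)).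
    rewrite Rabs_pos_eq in Hrate by lra.
    assert (r1 / K1 * x1 < r1 / K1 * c1)
      by (apply Rmult_lt_compat_l; [apply Rdiv_lt_0_compat|]; lra).
    replace (r1 / K1 * c1) with (r1 - 2 * kh) in * by (unfold c1, kh; field; lra).
    assert (a * x2 <= a * del) by (apply Rmult_le_compat_l; lra).
    lra.
  - intros x1 x2 Hx1 Hx2. rewrite parasite_rate_eq.
    assert (Hnear := response_increment K1 c1 ltac:(unfold c1; lra)).
    assert (Hmono := response_increment x1 c1 ltac:(unfold c1 in *; lra)).
    assert (r2 / K2 * x2 <= r2 / K2 * del)
      by (apply Rmult_le_compat_l; [apply Rle_mult_inv_pos|]; lra).
    unfold c1, rho in *. replace (K1 - (K1 - m)) with m in Hnear by ring. lra.
Qed.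

Lemma parasite_eventually_ge_high : r2 <= d -> 0 < r2 - d + response K1 ->
  exists eps, 0 < eps /\ forall x1 x2, solution x1 x2 ->
    exists T, forall t, T <= t -> eps <= x2 t.
Proof.
  intros Hdr Hrho.
  destruct (host_eventually_ge 0) as [e1 [He1 Hhost]]; rewrite ?Rmult_0_r; [lra|lra|lra|].
  destruct parasite_recovery_region as [del [c1 [k [Hdel [Hc1 [Hk [Hhgrow Hpgrow]]]]]]];
    [exact Hrho|].
  set (U := Rmin e1 c1). set (tau := (c1 - U) / (k * U)).
  assert (HU : 0 < U) by (apply Rmin_glb_lt; lra).
  assert (HUc : U <= c1) by apply Rmin_r.
  assert (Htau : 0 <= tau) by (apply Rle_mult_inv_pos; nra).
  set (L := d + r2 / K2 * X2max).
  assert (HL : 0 <= L).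
  { pose proof X2max_pos. assert (0 <= r2 / K2 * X2max)
    by (apply Rmult_le_pos; [apply Rle_mult_inv_pos|]; lra).
    unfold L; lra. }
  exists (del * exp (- L * tau)). split; [apply Rmult_lt_0_compat; [lra|apply exp_pos]|].
  intros x1 x2 Hs.
  destruct (solution_eventually_in_box x1 x2 Hs) as [T [HT Hbox]].
  destruct (Hhost x1 x2 Hs) as [Th HTh].
  assert (Hder := solution_derive x1 x2 Hs).
  set (T' := Rmax T Th).
  assert (HT' : T <= T') by apply Rmax_l. assert (HTh' : Th <= T') by apply Rmax_r.
  apply (eventually_ge_of_escape x2 (fun t => parasite_rate (x1 t) (x2 t)) T' del tau k);
    [intros r Hr; apply (Hder r); lra|intros r Hr; apply (Hbox r); lra|lra|exact Htau|lra| |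
     intros r Hr; apply parasite_rate_ge_box, Hbox; lra|exact HL].
  intros s t Hs' Hst Hrare r Hr.
  assert (Hx1 : c1 <= x1 r).
  { apply (enters_above x1 (fun t => host_rate (x1 t) (x2 t)) s t c1 k U tau);
      [intros r' Hr'; apply (Hder r'); lra|intros r' Hr'; apply (Hbox r'); lra| |exact HU
      |exact HUc|exact Hk| |exact Htau| |lra].
    - intros r' Hr' Hsmall. destruct (Hbox r' ltac:(lra)) as [[P1 _] [P2 _]].
      apply Hhgrow; [lra|split; [lra|apply Hrare; lra]].
    - assert (U <= e1) by apply Rmin_l. pose proof (HTh s ltac:(lra)). lra.
    - right. unfold tau. field. lra. }
  destruct (Hbox r ltac:(lra)) as [_ [P2 _]].
  apply Hpgrow; [exact Hx1|split; [lra|apply Hrare; lra]].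
Qed.

Lemma host_persistence_high_death : d > r2 -> host_persistent r1 r2 K1 K2 a h e d.
Proof.
  intros Hdr. apply persistent_of_eventually, (host_eventually_ge 0); rewrite ?Rmult_0_r; lra.
Qed.

Lemma host_persistence_weak_parasite :
  r1 / a > K2 * (1 - d / r2) -> K2 * (1 - d / r2) > 0 -> host_persistent r1 r2 K1 K2 a h e d.
Proof.
  intros Hgap Hs2. apply persistent_of_eventually, (host_eventually_ge (K2 * (1 - d / r2))).
  - lra.
  - apply (Rmult_lt_compat_l a) in Hgap; [|lra].
    replace (a * (r1 / a)) with r1 in Hgap by (field; lra). lra.
  - right. field. lra.
Qed.

Lemma parasite_persistence : r2 + e * a * K1 / (1 + a * h * K1) > d ->
  parasite_persistent r1 r2 K1 K2 a h e d.
Proof.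
  intros Hinv. apply persistent_of_eventually.
  destruct (Rlt_le_dec d r2) as [Hlow|Hhigh].
  - apply parasite_eventually_ge_low, Hlow.
  - apply parasite_eventually_ge_high; [exact Hhigh|].
    unfold response. replace (h * a * K1) with (a * h * K1) by ring. lra.
Qed.

Lemma parasite_invades_of_positive_capacity : K2 * (1 - d / r2) > 0 ->
  r2 + e * a * K1 / (1 + a * h * K1) > d.
Proof.
  intros Hs2.
  replace (K2 * (1 - d / r2)) with (K2 / r2 * (r2 - d)) in Hs2 by (field; lra).
  assert (Hdr : d < r2) by (assert (0 < K2 / r2) by (apply Rdiv_lt_0_compat; lra); nra).
  assert (0 <= e * a * K1 / (1 + a * h * K1)).
  { apply Rle_mult_inv_pos; [repeat apply Rmult_le_pos; lra|].
    assert (0 <= a * h * K1) by (repeat apply Rmult_le_pos; lra). lra. }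
  lra.
Qed.

End HostParasite.

Theorem theorem1 (r1 r2 K1 K2 a h e d : R) :
  0 < r1 -> 0 < r2 -> 0 < K1 -> 0 < K2 -> 0 < a -> 0 < h -> 0 < e -> 0 <= d ->
  ((d > r2 \/ (r1 / a > K2 * (1 - d / r2) /\ K2 * (1 - d / r2) > 0)) ->
     host_persistent r1 r2 K1 K2 a h e d) /\
  (r2 + e * a * K1 / (1 + a * h * K1) > d ->
     parasite_persistent r1 r2 K1 K2 a h e d) /\
  (((r2 + e * a * K1 / (1 + a * h * K1) > d /\ d > r2) \/
    (r1 / a > K2 * (1 - d / r2) /\ K2 * (1 - d / r2) > 0)) ->
     permanent r1 r2 K1 K2 a h e d).
Proof.
  intros Hr1 Hr2 HK1 HK2 Ha Hh He Hd.
  assert (Hhost : (d > r2 \/ (r1 / a > K2 * (1 - d / r2) /\ K2 * (1 - d / r2) > 0)) ->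
     host_persistent r1 r2 K1 K2 a h e d).
  { intros [Hdr | [Hgap Hs2]].
    - apply host_persistence_high_death; assumption.
    - apply host_persistence_weak_parasite; assumption. }
  assert (Hpar := parasite_persistence r1 r2 K1 K2 a h e d Hr1 Hr2 HK1 HK2 Ha Hh He Hd).
  split; [exact Hhost|split; [exact Hpar|]].
  intros [[Hinv Hdr] | [Hgap Hs2]]; split.
  - apply Hhost. left. exact Hdr.
  - exact (Hpar Hinv).
  - apply Hhost. right. split; assumption.
  - apply Hpar, (parasite_invades_of_positive_capacity r2 K1 K2 a h e d); assumption.
Qed.
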